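(* Let $m,p,n$ be positive integers with $p\mid m$. The codimension atoms of $G(m,p,n)$ are exactly the reflections in $G(m,p,n)$ together with the $p$-connected elements of $G(m,p,n)$, excluding those $p$-connected elements $g$ with $\operatorname{codim}(g)=2$ and $\det(g)=1$.
   Context: $\zeta_m=e^{2\pi i/m}$. $G(m,1,n)$ is the group of $n\times n$ monomial matrices whose nonzero entries are $m$-th roots of unity, acting on $V=\mathbb{C}^n$; for $p\mid m$, $G(m,p,n)$ is the subgroup of elements whose nonzero entries multiply to an $(m/p)$-th root of unity. A reflection is an element of finite order fixing a hyperplane pointwise. $\operatorname{codim}(g)=n-\dim\{v\in V:gv=v\}$; the codimension order is $a\le_\perp c$ iff $\operatorname{codim}(a)+\operatorname{codim}(a^{-1}c)=\operatorname{codim}(c)$, and a codimension atom is an element covering the identity in this poset. A diagonal matrix $g\ne 1$ whose non-1 eigenvalues (with multiplicity) are $\zeta_m^{c_1},\dots,\zeta_m^{c_k}$ is $p$-connected if $p\mid c_1+\dots+c_k$ but $p\nmid\sum_{i\in I}c_i$ for every nonempty proper subset $I\subsetneq\{1,\dots,k\}$. *)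

From mathcomp Require Import all_boot all_order all_algebra all_fingroup all_field.
Set Implicit Arguments. Unset Strict Implicit. Unset Printing Implicit Defensive.
Import GRing.Theory Num.Theory.
Local Open Scope ring_scope.

(* Matrices act on column vectors V = algC^n : v |-> g *m v. *)

Definition inGmpn (m p : nat) {n : nat} (g : 'M[algC]_n) : Prop :=
  exists s : 'S_n,
    (forall i j, j != s i -> g i j = 0) /\
    (forall i, m.-unity_root (g i (s i))) /\
    (m %/ p)%N.-unity_root (\prod_i g i (s i)).

(* dimension of the fixed space {v : g v = v}; a column vector v with g v = v
   is the transpose of a row vector in the left kernel of g^T - 1. *)
Definition fixdim n (g : 'M[algC]_n) : nat := \rank (kermx (g^T - 1%:M)).
Definition codim n (g : 'M[algC]_n) : nat := (n - fixdim g)%N.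

Definition le_codim n (a c : 'M[algC]_n) : Prop :=
  (codim a + codim (invmx a *m c))%N = codim c.

Definition codim_atom n (G : 'M[algC]_n -> Prop) (a : 'M[algC]_n) : Prop :=
  [/\ G a, le_codim 1%:M a, a <> 1%:M &
      forall b, G b -> le_codim 1%:M b -> le_codim b a -> b <> 1%:M -> b = a].

Definition mxpow n (g : 'M[algC]_n) (k : nat) : 'M[algC]_n := iter k (mulmx g) 1%:M.

Definition reflection n (g : 'M[algC]_n) : Prop :=
  (exists k, (0 < k)%N /\ mxpow g k = 1%:M) /\ fixdim g = n.-1.

Definition pconnected (m p : nat) (zeta : algC) n (g : 'M[algC]_n) : Prop :=
  is_diag_mx g /\ g <> 1%:M /\
  exists c : 'I_n -> nat,
    (forall i, g i i = zeta ^+ c i) /\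
    let I := [set i | g i i != 1] in
    (p %| \sum_(i in I) c i)%N /\
    (forall J : {set 'I_n}, J \proper I -> J != set0 -> ~~ (p %| \sum_(i in J) c i)%N).

From mathcomp Require Import all_boot all_order all_algebra all_fingroup all_field.
From mathcomp Require Import zify.
Set Implicit Arguments. Unset Strict Implicit. Unset Printing Implicit Defensive.
Import GRing.Theory Num.Theory.
Local Open Scope ring_scope.

(* Write Fix g for the fixed space of g.  If b lies below c in the codimension
   order then Fix b and Fix (b^-1 c) span the whole space, since they meet
   inside Fix c.  If an atom c of G(m,p,n) moves the line of e_j to that of e_i,
   the codimension-one element t of G(m,p,n) exchanging these two lines with the
   scalars of c satisfies Fix c < Fix (t c), hence lies below c: c = t is a
   reflection.  If c is diagonal, the restriction of c to a proper part J of its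
   support lies in G(m,p,n) exactly when p divides the exponent sum over J, and
   then lies below c; this gives p-connectedness.  In the excluded case (two
   non-1 eigenvalues with product 1) the permutation matrix of the transposition
   lies below c.  Conversely, reflections have codimension 1; and if b lies
   below a p-connected c, decomposing each e_i along Fix b and Fix (b^-1 c)
   shows that a 2-cycle of the permutation of b would give two eigenvalues of c
   with product 1, so b is diagonal and agrees with c on its support; that
   support has exponent sum divisible by p, hence is all of c's, and b = c. *)

Section FixedSpace.
Variables (F : fieldType) (n : nat).
Implicit Types (b c g : 'M[F]_n) (v : 'cV[F]_n).

Definition fixmx g := kermx (g - 1%:M)^T.

Lemma sub_fixmx k (A : 'M_(k, n)) g : (A <= fixmx g)%MS = ((g - 1%:M) *m A^T == 0).
Proof. by rewrite sub_kermx -trmx_eq0 trmx_mul !trmxK. Qed.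

Lemma fixmxP g v : (v^T <= fixmx g)%MS = (g *m v == v).
Proof. by rewrite sub_fixmx trmxK mulmxBl mul1mx subr_eq0. Qed.

Lemma mxrank_fixmx g : \rank (fixmx g) = (n - \rank (g - 1%:M)%R)%N.
Proof. by rewrite mxrank_ker mxrank_tr. Qed.

Lemma fixmxS b c : (forall v, b *m v = v -> c *m v = v) -> (fixmx b <= fixmx c)%MS.
Proof.
move=> bc; apply/row_subP => i; rewrite -[row i _]trmxK fixmxP.
by apply/eqP/bc/eqP; rewrite -fixmxP trmxK row_sub.
Qed.

Lemma mxrank_mul_subr1 b c :
  (\rank (b *m c - 1%:M)%R <= \rank (b - 1%:M)%R + \rank (c - 1%:M)%R)%N.
Proof.
have -> : b *m c - 1%:M = b *m (c - 1%:M) + (b - 1%:M).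
  by rewrite mulmxBr mulmx1 addrA subrK.
by rewrite addnC; apply: leq_trans (mxrank_add _ _) _; rewrite leq_add2r mxrankM_maxr.
Qed.

Lemma capmx_fixmx_mulV b c : b \in unitmx ->
  (fixmx b :&: fixmx (invmx b *m c) <= fixmx c)%MS.
Proof.
move=> b_unit; have := capmxSl (fixmx b) (fixmx (invmx b *m c)).
have := capmxSr (fixmx b) (fixmx (invmx b *m c)).
rewrite !sub_fixmx => /eqP fix_d /eqP fix_b.
have -> : c - 1%:M = b *m (invmx b *m c - 1%:M) + (b - 1%:M).
  by rewrite mulmxBr mulKVmx // mulmx1 addrA subrK.
by rewrite mulmxDl -mulmxA fix_d fix_b mulmx0 addr0.
Qed.

Lemma rank_additive_decomp b c : b \in unitmx ->
  (\rank (b - 1%:M)%R + \rank (invmx b *m c - 1%:M)%R = \rank (c - 1%:M)%R)%N ->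
  forall x : 'cV_n, exists v w : 'cV_n, [/\ b *m v = v, c *m w = b *m w & x = v + w].
Proof.
move=> b_unit rank_add x.
have full : row_full (fixmx b + fixmx (invmx b *m c))%MS.
  have := mxrank_sum_cap (fixmx b) (fixmx (invmx b *m c)).
  have := mxrankS (capmx_fixmx_mulV c b_unit); rewrite !mxrank_fixmx /row_full.
  have := rank_leq_col (fixmx b + fixmx (invmx b *m c))%MS.
  have := rank_leq_row (invmx b *m c - 1%:M); have := rank_leq_row (c - 1%:M).
  (* Naming the ranks identifies copies elaborated through different instance
     paths, which lia would otherwise treat as distinct atoms. *)
  move: rank_add; set rb := \rank (b - 1%:M); set rd := \rank (invmx b *m c - 1%:M).
  set rc := \rank (c - 1%:M); lia.
have /sub_addsmxP[[u1 u2] /= x_sum] := submx_full x^T full.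
exists (u1 *m fixmx b)^T, (u2 *m fixmx (invmx b *m c))^T; split.
- by apply/eqP; rewrite -fixmxP trmxK submxMl.
- have : ((u2 *m fixmx (invmx b *m c))^T^T <= fixmx (invmx b *m c))%MS.
    by rewrite trmxK submxMl.
  by rewrite fixmxP -mulmxA => /eqP/(congr1 (mulmx b)); rewrite mulKVmx.
- by rewrite -linearD /= -x_sum trmxK.
Qed.

Lemma rank_additive_of_fix_growth b c : b \in unitmx -> \rank (b - 1%:M) = 1%N ->
  (fixmx c < fixmx (invmx b *m c))%MS ->
  (\rank (b - 1%:M)%R + \rank (invmx b *m c - 1%:M)%R = \rank (c - 1%:M)%R)%N.
Proof.
move=> b_unit rank_b fix_lt; have := rank_ltmx fix_lt; rewrite !mxrank_fixmx.
have := mxrank_mul_subr1 b (invmx b *m c); rewrite mulKVmx // rank_b.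
have := rank_leq_row (c - 1%:M); have := rank_leq_row (invmx b *m c - 1%:M).
set rd := \rank (invmx b *m c - 1%:M); set rc := \rank (c - 1%:M); lia.
Qed.

End FixedSpace.

Section Codimension.
Variable n : nat.
Implicit Types b g : 'M[algC]_n.

Lemma fixdimE g : fixdim g = (n - \rank (g - 1%:M)%R)%N.
Proof. by rewrite /fixdim -mxrank_fixmx /fixmx linearB /= trmx1. Qed.

Lemma codimE g : codim g = \rank (g - 1%:M).
Proof. by rewrite /codim fixdimE subKn ?rank_leq_row. Qed.

Lemma codim_eq0 g : (codim g == 0%N) = (g == 1%:M).
Proof. by rewrite codimE mxrank_eq0 subr_eq0. Qed.

Lemma le_codim1l g : le_codim 1%:M g.
Proof. by rewrite /le_codim invmx1 mul1mx codimE subrr mxrank0. Qed.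

Lemma reflection_codim g : (0 < n)%N -> reflection g -> codim g = 1%N.
Proof. by move=> n_gt0 [_]; rewrite /codim => ->; lia. Qed.

Lemma involution_reflection g : g *m g = 1%:M -> codim g = 1%N -> reflection g.
Proof.
move=> gg g1; split; first by exists 2%N; rewrite /mxpow /= mulmx1.
by rewrite fixdimE -codimE g1 subn1.
Qed.

Lemma codim1_atom (G : 'M[algC]_n -> Prop) g :
  (forall b, G b -> b \in unitmx) -> G g -> codim g = 1%N -> codim_atom G g.
Proof.
move=> G_unit Gg g1; split=> //; first exact: le_codim1l.
  by apply/eqP; rewrite -codim_eq0 g1.
move=> b Gb _; rewrite /le_codim g1 => b_le b_neq1.
have b_gt0 : codim b != 0%N by rewrite codim_eq0; apply/eqP.
have : codim (invmx b *m g) == 0%N by lia.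
by rewrite codim_eq0 => /eqP b_g; rewrite -[g](mulKVmx (G_unit _ Gb)) b_g mulmx1.
Qed.

End Codimension.

Section Monomial.
Variables (F : fieldType) (n : nat).

Lemma mulmx_monomial (g : 'M[F]_n) (s : 'S_n) k (h : 'M[F]_(n, k)) :
  (forall i j, j != s i -> g i j = 0) -> forall i j, (g *m h) i j = g i (s i) * h (s i) j.
Proof.
move=> g_mono i j; rewrite mxE (bigD1 (s i)) //= big1 ?addr0 // => l l_neq.
by rewrite g_mono ?mul0r.
Qed.

Lemma mulmx_diagE (c : 'M[F]_n) k (h : 'M[F]_(n, k)) :
  is_diag_mx c -> forall i j, (c *m h) i j = c i i * h i j.
Proof.
move=> /is_diag_mxP c_diag i j; rewrite (@mulmx_monomial _ 1) ?perm1 // => a b.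
by rewrite perm1 eq_sym; apply: c_diag.
Qed.

Lemma monomial_unit (g : 'M[F]_n) (s : 'S_n) :
  (forall i j, j != s i -> g i j = 0) -> (forall i, g i (s i) != 0) -> g \in unitmx.
Proof.
move=> g_mono g_nz.
pose h : 'M[F]_n := \matrix_(a, k) if a == s k then (g k a)^-1 else 0.
suff /mulmx1_unit[] : g *m h = 1%:M by [].
apply/matrixP => i k; rewrite (mulmx_monomial _ g_mono) !mxE (inj_eq perm_inj).
by case: eqVneq => [->|]; rewrite ?mulfV ?mulr0.
Qed.

Definition swapmx (i j : 'I_n) (x : F) : 'M[F]_n :=
  \matrix_(a, b) if a == i then (b == j)%:R * x
                 else if a == j then (b == i)%:R * x^-1 else (a == b)%:R.

Section Swap.
Variables (i j : 'I_n) (x : F).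
Hypothesis i_neq_j : i != j.

Lemma swapmx_monomial a b : b != tperm i j a -> swapmx i j x a b = 0.
Proof.
rewrite mxE; case: tpermP => [->|->|/eqP a_i /eqP a_j]; rewrite ?eqxx.
- by move/negbTE->; rewrite mul0r.
- by rewrite (eq_sym j i) (negbTE i_neq_j) => /negbTE->; rewrite mul0r.
- by rewrite (negbTE a_i) (negbTE a_j) eq_sym => /negbTE->.
Qed.

Lemma swapmx_tperm a :
  swapmx i j x a (tperm i j a) = if a == i then x else if a == j then x^-1 else 1.
Proof.
rewrite mxE; case: tpermP => [->|->|/eqP a_i /eqP a_j]; rewrite ?eqxx ?mul1r //.
- by rewrite (eq_sym j i) (negbTE i_neq_j).
- by rewrite (negbTE a_i) (negbTE a_j).
Qed.

Lemma mulmx_swapmx k (h : 'M[F]_(n, k)) a l :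
  (swapmx i j x *m h) a l =
    if a == i then x * h j l else if a == j then x^-1 * h i l else h a l.
Proof.
rewrite (mulmx_monomial _ swapmx_monomial) swapmx_tperm.
case: tpermP => [->|->|/eqP a_i /eqP a_j]; rewrite ?eqxx //.
- by rewrite (eq_sym j i) (negbTE i_neq_j).
- by rewrite (negbTE a_i) (negbTE a_j) mul1r.
Qed.

Hypothesis x_neq0 : x != 0.

Lemma swapmxK : swapmx i j x *m swapmx i j x = 1%:M.
Proof.
apply/matrixP => a b; rewrite mulmx_swapmx !mxE !eqxx (eq_sym j i) (negbTE i_neq_j).
case: (eqVneq a i) => [->|a_i]; first by rewrite mulrCA mulfV // mulr1 eq_sym.
case: (eqVneq a j) => [->|a_j]; last by [].
by rewrite mulrCA mulVf // mulr1 eq_sym.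
Qed.

Lemma invmx_swapmx : invmx (swapmx i j x) = swapmx i j x.
Proof.
have [t_unit _] := mulmx1_unit swapmxK.
by rewrite -[invmx _]mulmx1 -swapmxK mulmxA mulVmx ?mul1mx.
Qed.

Lemma mxrank_swapmx_subr1 : \rank (swapmx i j x - 1%:M) = 1%N.
Proof.
apply/eqP; rewrite eqn_leq; apply/andP; split; last first.
  rewrite lt0n mxrank_eq0 subr_eq0; apply/eqP => /matrixP /(_ i i).
  by rewrite !mxE !eqxx (negbTE i_neq_j) mul0r => /eqP; rewrite eq_sym oner_eq0.
pose u : 'cV[F]_n := \col_a (if a == i then 1 else if a == j then - x^-1 else 0).
pose w : 'rV[F]_n := \row_b (if b == i then -1 else if b == j then x else 0).
suff -> : swapmx i j x - 1%:M = u *m w.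
  exact: leq_trans (mxrankM_maxr _ _) (rank_leq_row _).
apply/matrixP => a b; rewrite !mxE big_ord1 !mxE.
case: (eqVneq a i) => [->|a_i].
  rewrite mul1r; case: (eqVneq b i) => [->|b_i].
    by rewrite (negbTE i_neq_j) mul0r sub0r.
  by case: (b == j); rewrite ?mul1r ?mul0r subr0.
case: (eqVneq a j) => [->|a_j]; last by rewrite subrr mul0r.
case: (eqVneq b i) => [->|b_i].
  by rewrite (eq_sym j i) (negbTE i_neq_j) mul1r subr0 mulrN mulr1 opprK.
rewrite mul0r sub0r eq_sym.
by case: (b == j); rewrite ?mulr0 ?mulNr ?mulVf ?oppr0.
Qed.

End Swap.

Lemma monomial_fixmx_lt_swapmx (c : 'M[F]_n) (s : 'S_n) i :
  (forall a b, b != s a -> c a b = 0) -> c i (s i) != 0 -> s i != i ->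
  (fixmx c < fixmx (swapmx i (s i) (c i (s i)) *m c))%MS.
Proof.
move=> c_mono x_nz si_i; set j := s i in si_i *; set x := c i j in x_nz *.
have i_j : i != j by rewrite eq_sym.
have c_delta a : (c *m delta_mx j 0) a 0 = (a == i)%:R * x.
  rewrite (mulmx_monomial _ c_mono) !mxE andbT mulrC /x.
  case: (eqVneq a i) => [->|a_i]; first by rewrite /j eqxx.
  by rewrite /j (inj_eq perm_inj) (negbTE a_i) !mul0r.
rewrite ltmxE; apply/andP; split.
  apply: fixmxS => v cv; rewrite -mulmxA cv; apply/matrixP => a l.
  have v_i : v i l = x * v j l by rewrite -{1}cv (mulmx_monomial _ c_mono).
  rewrite mulmx_swapmx //; case: eqVneq => [->|_]; first by rewrite -v_i.
  by case: eqVneq => [->|_] //; rewrite v_i mulKf.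
apply/negP => fix_sub.
have e_j_fix : ((delta_mx j 0 : 'cV[F]_n)^T <= fixmx (swapmx i j x *m c))%MS.
  rewrite fixmxP -mulmxA; apply/eqP/matrixP => a l; rewrite ord1 mulmx_swapmx //.
  rewrite !c_delta !mxE !eqxx (eq_sym j i) (negbTE i_j) mul0r mulr0 mul1r mulVf //.
  rewrite andbT; case: (eqVneq a i) => [->|_]; first by rewrite (negbTE i_j).
  by case: (eqVneq a j); rewrite ?mul0r.
have := submx_trans e_j_fix fix_sub; rewrite fixmxP => /eqP /matrixP /(_ j 0).
by rewrite c_delta !mxE eq_sym (negbTE i_j) !eqxx mul0r => /eqP; rewrite eq_sym oner_eq0.
Qed.

End Monomial.

Section Diagonal.
Variables (F : fieldType) (n : nat).
Implicit Types (c : 'M[F]_n) (d : 'rV[F]_n).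

Lemma mxrank_diag_mx d : \rank (diag_mx d) = #|[set k | d 0 k != 0]|.
Proof.
set S := [set k | _].
have rowspace_d : (diag_mx d :=: \sum_(k in S) <<delta_mx 0 k : 'rV_n>>)%MS.
  apply/eqmxP/andP; split.
    apply/row_subP => k; rewrite row_diag_mx.
    have [k_S|] := boolP (k \in S).
      by apply: (sumsmx_sup k) => //; rewrite genmxE scalemx_sub.
    by rewrite inE negbK => /eqP->; rewrite scale0r sub0mx.
  apply/sumsmx_subP => k; rewrite inE genmxE => dk.
  by rewrite -[delta_mx 0 k](scalerK dk) -row_diag_mx; apply/scalemx_sub/row_sub.
rewrite rowspace_d.
have /mxdirectP -> := @mxdirect_delta F _ (mem S) n id (in2W (@inj_id _)).
by rewrite /= -sum1_card; apply: eq_bigr => k _; rewrite genmxE mxrank_delta.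
Qed.

Definition diag_on (J : {set 'I_n}) c : 'M[F]_n :=
  diag_mx (\row_k (if k \in J then c k k else 1)).

Lemma diag_onE J c k : diag_on J c k k = if k \in J then c k k else 1.
Proof. by rewrite !mxE eqxx. Qed.

Lemma diag_on_is_diag J c : is_diag_mx (diag_on J c).
Proof. exact: diag_mx_is_diag. Qed.

Lemma diag_onC J c : is_diag_mx c -> diag_on J c *m diag_on (~: J) c = c.
Proof.
move=> /is_diag_mxP c_diag; rewrite /diag_on mulmx_diag.
apply/matrixP => i j; rewrite !mxE.
case: (eqVneq i j) => [<-|i_j]; rewrite mulrb; last by rewrite c_diag.
by rewrite inE; case: (i \in J); rewrite ?mulr1 ?mul1r.
Qed.

Lemma det_is_diag c : is_diag_mx c -> \det c = \prod_k c k k.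
Proof.
by move=> /diag_mxP[d ->]; rewrite det_diag; apply: eq_bigr => k _; rewrite mxE eqxx.
Qed.

End Diagonal.

Lemma codim_diag n (c : 'M[algC]_n) :
  is_diag_mx c -> codim c = #|[set k | c k k != 1]|.
Proof.
move=> /diag_mxP[d ->]; rewrite codimE -diag_const_mx -linearB mxrank_diag_mx.
by apply: eq_card => k; rewrite !inE !mxE eqxx subr_eq0.
Qed.

Lemma codim_diag_on n (J : {set 'I_n}) (c : 'M[algC]_n) :
  codim (diag_on J c) = #|J :&: [set k | c k k != 1]|.
Proof.
rewrite codim_diag ?diag_on_is_diag //; apply: eq_card => k.
by rewrite !inE diag_onE; case: (k \in J); rewrite ?eqxx.
Qed.

Section BelowDiagonal.
Variables (F : fieldType) (n : nat) (b c : 'M[F]_n) (s : 'S_n).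
Hypotheses (b_mono : forall i j, j != s i -> b i j = 0) (b_nz : forall i, b i (s i) != 0).
Hypotheses (c_diag : is_diag_mx c) (c_nz : forall k, c k k != 0).
Hypothesis b_le_c :
  (\rank (b - 1%:M)%R + \rank (invmx b *m c - 1%:M)%R = \rank (c - 1%:M)%R)%N.

Lemma below_diag_decomp i : exists v w : 'I_n -> F,
  [/\ forall a, v a = b a (s a) * v (s a),
      forall a, c a a * w a = b a (s a) * w (s a) &
      forall a, v a + w a = (a == i)%:R].
Proof.
have b_unit := monomial_unit b_mono b_nz.
have [v [w [bv cw e_i]]] := rank_additive_decomp b_unit b_le_c (delta_mx i 0).
exists (fun a => v a 0), (fun a => w a 0); split => a.
- by rewrite -{1}bv (mulmx_monomial _ b_mono).
- by rewrite -mulmx_diagE // cw (mulmx_monomial _ b_mono).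
- by have /matrixP/(_ a 0) := e_i; rewrite !mxE eqxx andbT => <-.
Qed.

Lemma below_diag_moved i : s i != i -> c i i != 1.
Proof.
move=> si_i; apply/eqP => c_i1; have [v [w [bv cw e_i]]] := below_diag_decomp i.
have := cw i; rewrite c_i1 mul1r => w_i.
have := e_i i; rewrite eqxx bv w_i -mulrDr e_i (negbTE si_i) mulr0.
by move/eqP; rewrite eq_sym oner_eq0.
Qed.

Lemma below_diag_cycle2 i : s i != i -> s (s i) = i.
Proof.
move=> si_i; apply/eqP; apply: contraT => ssi_i.
have ssi_si : s (s i) != s i by rewrite (inj_eq perm_inj).
have [v [w [bv cw e_i]]] := below_diag_decomp i.
have w_opp a : a != i -> w a = - v a.
  by move=> a_i; apply/esym/addr0_eq; rewrite e_i (negbTE a_i).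
have c_w : c (s i) (s i) * w (s i) = w (s i).
  by rewrite cw !w_opp // mulrN -bv.
have v_si : v (s i) = 0.
  apply/eqP; rewrite -oppr_eq0 -w_opp //; move/eqP: c_w.
  rewrite -subr_eq0 -{2}[w _]mul1r -mulrBl mulf_eq0 subr_eq0.
  by rewrite (negbTE (below_diag_moved ssi_si)).
have w_i : w i = 0.
  apply/eqP; have := cw i; rewrite (w_opp (s i)) // v_si oppr0 mulr0 => /eqP.
  by rewrite mulf_eq0 (negbTE (c_nz i)).
by have := e_i i; rewrite eqxx bv v_si mulr0 w_i addr0 => /eqP; rewrite eq_sym oner_eq0.
Qed.

Lemma below_diag_swap i : s i != i -> c i i * c (s i) (s i) = 1.
Proof.
move=> si_i; have ssi := below_diag_cycle2 si_i.
have [v [w [bv cw e_i]]] := below_diag_decomp i.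
have := bv (s i); have := cw (s i); rewrite ssi.
have := e_i (s i); have := e_i i; have := bv i; have := cw i.
rewrite eqxx (negbTE si_i); set j := s i => cw_i bv_i e_1 e_0 cw_j bv_j.
have w_j : w j = - v j by apply/esym/addr0_eq.
have v_i_nz : v i != 0.
  apply/eqP => v_i0; move: cw_i; rewrite w_j bv_j v_i0 !(mulr0, oppr0) => /eqP.
  rewrite mulf_eq0 (negbTE (c_nz i)) /= => /eqP w_i0.
  by move: e_1; rewrite v_i0 w_i0 addr0 => /eqP; rewrite eq_sym oner_eq0.
have w_i_nz : w i != 0.
  apply/eqP => w_i0; move: cw_j; rewrite w_i0 mulr0 w_j => /eqP.
  rewrite mulf_eq0 (negbTE (c_nz j)) oppr_eq0 /= => /eqP v_j0.
  by move: e_1; rewrite bv_i v_j0 w_i0 !mulr0 addr0 => /eqP; rewrite eq_sym oner_eq0.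
have b_ij_ji : b i j * b j i = 1.
  by apply: (mulIf v_i_nz); rewrite mul1r -mulrA -bv_j -bv_i.
apply: (mulIf w_i_nz); rewrite mul1r [c i i * _]mulrC -mulrA cw_i mulrCA cw_j.
by rewrite mulrA b_ij_ji mul1r.
Qed.

Lemma below_diag_fixed k : s k = k -> b k k != 1 -> b k k = c k k.
Proof.
move=> sk b_k1; have [v [w [bv cw e_k]]] := below_diag_decomp k.
have := bv k; have := cw k; have := e_k k; rewrite sk eqxx => e_1 cw_k bv_k.
have v_k0 : v k = 0.
  apply/eqP; move/eqP: bv_k; rewrite -subr_eq0 -{1}[v k]mul1r -mulrBl mulf_eq0.
  by rewrite subr_eq0 eq_sym (negbTE b_k1).
have w_k1 : w k = 1 by move: e_1; rewrite v_k0 add0r.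
by move: cw_k; rewrite w_k1 !mulr1.
Qed.

End BelowDiagonal.

Lemma unity_root_neq0 (R : nzRingType) k (x : R) :
  (0 < k)%N -> k.-unity_root x -> x != 0.
Proof.
move=> k_gt0; rewrite unity_rootE; apply: contraTneq => ->.
by rewrite expr0n gtn_eqF // eq_sym oner_eq0.
Qed.

Lemma prim_root_unity_divn (R : idomainType) m p (z : R) N : (p %| m)%N ->
  m.-primitive_root z -> (m %/ p).-unity_root (z ^+ N) = (p %| N)%N.
Proof.
move=> p_dvd_m z_prim; have m_gt0 := prim_order_gt0 z_prim.
have p_gt0 : (0 < p)%N.
  by case: p p_dvd_m => //; rewrite dvd0n => /eqP m0; rewrite m0 in m_gt0.
rewrite unity_rootE -exprM -(prim_order_dvd z_prim) -{1}(divnK p_dvd_m) mulnC.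
by rewrite dvdn_pmul2r // divn_gt0 // dvdn_leq.
Qed.

Section ComplexReflectionGroup.
Variables (m p n : nat).
Hypothesis m_gt0 : (0 < m)%N.

Local Notation G := (@inGmpn m p n).

Lemma inGmpn_unit g : G g -> g \in unitmx.
Proof.
case=> s [g_mono [g_unity _]]; apply: (monomial_unit g_mono) => i.
exact: unity_root_neq0 m_gt0 (g_unity i).
Qed.

Lemma swapmx_inGmpn i j x : i != j -> x ^+ m = 1 -> G (swapmx i j x).
Proof.
move=> i_j x_m; exists (tperm i j); split; first exact: swapmx_monomial.
split=> [a|].
  rewrite swapmx_tperm // unity_rootE; case: ifP => _; first by rewrite x_m.
  by case: ifP => _; rewrite ?exprVn ?x_m ?invr1 ?expr1n.
rewrite (bigD1 i) //= (bigD1 j) 1?eq_sym //= big1 => [|a /andP[a_i a_j]].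
  rewrite !swapmx_tperm // eqxx (eq_sym j i) (negbTE i_j) eqxx mulr1 mulfV.
    by rewrite unity_rootE expr1n.
  by apply: contra_eq_neq x_m => ->; rewrite expr0n gtn_eqF // eq_sym oner_eq0.
by rewrite swapmx_tperm // (negbTE a_i) (negbTE a_j).
Qed.

Lemma diag_inGmpnP c : is_diag_mx c ->
  G c <-> (forall k, m.-unity_root (c k k)) /\ (m %/ p).-unity_root (\prod_k c k k).
Proof.
move=> /is_diag_mxP c_diag; split.
  case=> s [c_mono [c_unity c_det]].
  have s1 k : s k = k.
    apply/eqP; apply: contraT => s_k; have := unity_root_neq0 m_gt0 (c_unity k).
    by rewrite c_diag 1?eq_sym // eqxx.
  split=> [k|]; first by have := c_unity k; rewrite s1.
  by have := c_det; under eq_bigr do rewrite s1.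
case=> c_unity c_det; exists 1%g; split=> [a b|].
  by rewrite perm1 eq_sym; apply: c_diag.
by split=> [a|]; rewrite ?perm1 //; under eq_bigr do rewrite perm1.
Qed.

Lemma moving_atom_reflection c (s : 'S_n) i : codim_atom G c ->
  (forall a b, b != s a -> c a b = 0) -> (forall a, m.-unity_root (c a (s a))) ->
  s i != i -> reflection c.
Proof.
case=> _ _ _ c_min c_mono c_unity si_i.
have x_nz : c i (s i) != 0 := unity_root_neq0 m_gt0 (c_unity i).
have i_si : i != s i by rewrite eq_sym.
set t := swapmx i (s i) (c i (s i)).
have t_codim : codim t = 1%N by rewrite codimE mxrank_swapmx_subr1.
have t_le_c : le_codim t c.
  rewrite /le_codim !codimE; apply: rank_additive_of_fix_growth.
  - by case: (mulmx1_unit (swapmxK i_si x_nz)).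
  - exact: mxrank_swapmx_subr1.
  - by rewrite invmx_swapmx //; apply: monomial_fixmx_lt_swapmx.
have Gt : G t by apply/swapmx_inGmpn/unity_rootP/c_unity.
have t_neq1 : t <> 1%:M by apply/eqP; rewrite -codim_eq0 t_codim.
rewrite -(c_min t Gt (le_codim1l t) t_le_c t_neq1).
exact: involution_reflection (swapmxK i_si x_nz) t_codim.
Qed.

Lemma diag_atom_not_codim2_det1 c : codim_atom G c -> is_diag_mx c ->
  ~ (codim c = 2%N /\ \det c = 1).
Proof.
move=> [Gc _ _ c_min] c_diag [c_codim c_det]; have /is_diag_mxP c_off := c_diag.
have [c_unity _] := (diag_inGmpnP c_diag).1 Gc.
have /cards2P[i [j [i_j I_ij]]] : #|[set k | c k k != 1]| == 2%N.
  by rewrite -codim_diag // c_codim.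
have c_out k : k != i -> k != j -> c k k = 1.
  move=> k_i k_j; apply/eqP/negbNE/negP => c_k.
  have : k \in [set i; j] by rewrite -I_ij inE.
  by rewrite !inE (negbTE k_i) (negbTE k_j).
have c_ij : c i i * c j j = 1.
  rewrite -c_det det_is_diag // (bigD1 i) //= (bigD1 j) 1?eq_sym //= big1 ?mulr1 //.
  by move=> k /andP[k_i k_j]; apply: c_out.
have c_j_nz : c j j != 0 := unity_root_neq0 m_gt0 (c_unity j).
have c_i : c i i = (c j j)^-1 by rewrite -[c i i](mulfK c_j_nz) c_ij mul1r.
pose t := swapmx i j (1 : algC).
have t_c : t *m c = swapmx i j (c j j).
  apply/matrixP => a b; rewrite mulmx_swapmx // !mul1r invr1 !mxE.
  case: (eqVneq a i) => [_|a_i].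
    by case: (eqVneq b j) => [->|b_j]; rewrite ?mul1r // c_off 1?eq_sym // mul0r.
  case: (eqVneq a j) => [_|a_j].
    by case: (eqVneq b i) => [->|b_i]; rewrite ?mul1r // c_off 1?eq_sym // mul0r.
  by case: (eqVneq a b) => [<-|a_b]; rewrite ?c_out ?c_off.
have t_le_c : le_codim t c.
  rewrite /le_codim invmx_swapmx ?oner_neq0 // t_c c_codim !codimE.
  by rewrite !mxrank_swapmx_subr1 ?oner_neq0.
have Gt : G t by apply: swapmx_inGmpn; rewrite ?expr1n.
have t_neq1 : t <> 1%:M.
  by apply/eqP; rewrite -codim_eq0 codimE mxrank_swapmx_subr1 ?oner_neq0.
have := c_min t Gt (le_codim1l t) t_le_c t_neq1 => /matrixP/(_ i j).
by rewrite /t !mxE !eqxx mulr1 c_off // => /eqP; rewrite oner_eq0.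
Qed.

Section PrimitiveRoot.
Variable zeta : algC.
Hypotheses (p_dvd_m : (p %| m)%N) (zeta_prim : m.-primitive_root zeta).

Lemma prim_root_exponents (I : finType) (f : I -> algC) :
  (forall k, m.-unity_root (f k)) -> exists e : I -> nat, forall k, f k = zeta ^+ e k.
Proof.
move=> f_unity; suff /fin_all_exists[e f_e] : forall k, exists e : nat, f k = zeta ^+ e.
  by exists e.
by move=> k; have /unity_rootP/(prim_rootP zeta_prim)[e ->] := f_unity k; exists e.
Qed.

Lemma prod_prim_exponents (I : finType) (f : I -> algC) (e : I -> nat) (J : {pred I}) :
  (forall k, f k = zeta ^+ e k) ->
  (m %/ p).-unity_root (\prod_(k in J) f k) = (p %| \sum_(k in J) e k)%N.
Proof.
move=> f_e; rewrite -(prim_root_unity_divn _ p_dvd_m zeta_prim) -prodrXr.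
by under eq_bigr do rewrite f_e.
Qed.

Lemma diag_atom_pconnected c : codim_atom G c -> is_diag_mx c -> pconnected m p zeta c.
Proof.
move=> [Gc _ c_neq1 c_min] c_diag; have [c_unity c_det] := (diag_inGmpnP c_diag).1 Gc.
have [e c_e] := prim_root_exponents c_unity.
do 2!split=> //; exists e; split=> //=; set I := [set k | c k k != 1].
have prod_I : \prod_(k in I) c k k = \prod_k c k k.
  by rewrite big_mkcond; apply: eq_bigr => k _; rewrite inE; case: eqVneq.
split; first by rewrite -(prod_prim_exponents _ c_e) prod_I c_det.
move=> J /properP[J_sub [k k_I k_J]] J_nz; apply/negP => p_J.
set b := diag_on J c.
have Gb : G b.
  apply/diag_inGmpnP; first exact: diag_on_is_diag.
  split=> [l|].
    by rewrite diag_onE; case: ifP => _; rewrite ?c_unity // unity_rootE expr1n.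
  have -> : \prod_l b l l = \prod_(l in J) c l l.
    by rewrite [RHS]big_mkcond; apply: eq_bigr => l _; rewrite diag_onE.
  by rewrite (prod_prim_exponents _ c_e).
have b_le_c : le_codim b c.
  rewrite /le_codim -{1}(diag_onC J c_diag) mulKmx ?inGmpn_unit //.
  rewrite !codim_diag_on codim_diag // -/I.
  by rewrite (setIC J) (setIC (~: J)) -setDE cardsID.
have b_neq1 : b <> 1%:M.
  have /set0Pn[l l_J] := J_nz; move/matrixP/(_ l l); rewrite diag_onE l_J !mxE eqxx.
  by apply/eqP; move: (subsetP J_sub l l_J); rewrite inE.
have := c_min b Gb (le_codim1l b) b_le_c b_neq1 => /matrixP/(_ k k).
by rewrite diag_onE (negbTE k_J) => /esym/eqP; rewrite inE in k_I; rewrite (negbTE k_I).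
Qed.

Section BelowPConnected.
Variables (c b : 'M[algC]_n) (s : 'S_n) (e : 'I_n -> nat).
Local Notation I := [set k | c k k != 1].
Hypotheses (c_diag : is_diag_mx c) (c_e : forall k, c k k = zeta ^+ e k).
Hypothesis c_conn :
  forall J : {set 'I_n}, J \proper I -> J != set0 -> ~~ (p %| \sum_(k in J) e k)%N.
Hypothesis c_not_excluded : ~ (codim c = 2%N /\ \det c = 1).
Hypotheses (b_mono : forall i j, j != s i -> b i j = 0)
  (b_unity : forall i, m.-unity_root (b i (s i)))
  (b_det : (m %/ p).-unity_root (\prod_i b i (s i))).
Hypothesis b_le_c :
  (\rank (b - 1%:M)%R + \rank (invmx b *m c - 1%:M)%R = \rank (c - 1%:M)%R)%N.

Let b_nz i : b i (s i) != 0 := unity_root_neq0 m_gt0 (b_unity i).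
Let c_nz k : c k k != 0.
Proof. by rewrite c_e expf_neq0 // (prim_root_eq0 zeta_prim) gtn_eqF. Qed.

Lemma below_pconnected_perm1 i : s i = i.
Proof.
apply/eqP; apply: contraT => si_i.
have ssi := below_diag_cycle2 b_mono b_nz c_diag c_nz b_le_c si_i.
have c_swap := below_diag_swap b_mono b_nz c_diag c_nz b_le_c si_i.
have i_si : i != s i by rewrite eq_sym.
have pair_I : [set i; s i] \subset I.
  apply/subsetP => k; rewrite !inE => /orP[]/eqP->;
    apply: (below_diag_moved b_mono b_nz c_diag b_le_c); rewrite ?ssi //.
have prod_pair : \prod_(k in [set i; s i]) c k k = 1.
  by rewrite big_setU1 ?inE //= big_set1 c_swap.
have p_pair : (p %| \sum_(k in [set i; s i]) e k)%N.
  by rewrite -(prod_prim_exponents _ c_e) prod_pair unity_rootE expr1n.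
move: pair_I; rewrite subEproper => /orP[/eqP pair_eq | pair_proper].
  exfalso; apply: c_not_excluded.
  rewrite codim_diag // det_is_diag // -pair_eq cards2 i_si.
  split=> //; rewrite -[RHS]prod_pair pair_eq [RHS]big_mkcond.
  by apply: eq_bigr => k _; rewrite inE; case: eqVneq.
have pair_nz : [set i; s i] != set0 by apply/set0Pn; exists i; rewrite !inE eqxx.
by have := c_conn pair_proper pair_nz; rewrite p_pair.
Qed.

Lemma below_pconnected_eq : b <> 1%:M -> b = c.
Proof.
move=> b_neq1; have b_diag : is_diag_mx b.
  by apply/is_diag_mxP => a l a_l; apply: b_mono; rewrite below_pconnected_perm1 eq_sym.
have b_fix k : b k k != 1 -> b k k = c k k.
  exact: (below_diag_fixed b_mono b_nz c_diag b_le_c (below_pconnected_perm1 k)).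
set Jb := [set k | b k k != 1].
have Jb_sub : Jb \subset I by apply/subsetP => k; rewrite !inE => b_k; rewrite -b_fix.
have prod_Jb : \prod_(k in Jb) c k k = \prod_i b i (s i).
  rewrite big_mkcond; apply: eq_bigr => k _; rewrite below_pconnected_perm1 inE.
  by case: (eqVneq (b k k) 1) => [->|/b_fix->].
have p_Jb : (p %| \sum_(k in Jb) e k)%N by rewrite -(prod_prim_exponents _ c_e) prod_Jb.
have Jb_nz : Jb != set0.
  apply/negP => /eqP Jb0; apply: b_neq1; apply/matrixP => a l; rewrite !mxE.
  case: (eqVneq a l) => [<-|a_l]; last by rewrite (is_diag_mxP b_diag).
  have : a \notin Jb by rewrite Jb0 inE.
  by rewrite inE negbK => /eqP.
have Jb_I : Jb = I.
  move: Jb_sub; rewrite subEproper => /orP[/eqP // | Jb_proper].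
  by have := c_conn Jb_proper Jb_nz; rewrite p_Jb.
apply/matrixP => a l; case: (eqVneq a l) => [<-|a_l]; last first.
  by rewrite (is_diag_mxP b_diag) ?(is_diag_mxP c_diag).
have [/b_fix //|] := boolP (b a a != 1); rewrite negbK => /eqP b_a1.
have : a \notin I by rewrite -Jb_I inE b_a1 eqxx.
by rewrite inE negbK b_a1 => /eqP.
Qed.

End BelowPConnected.

Lemma pconnected_atom c : G c -> pconnected m p zeta c ->
  ~ (codim c = 2%N /\ \det c = 1) -> codim_atom G c.
Proof.
move=> Gc [c_diag [c_neq1 [e [c_e [_ c_conn]]]]] c_not_excluded.
split=> //; first exact: le_codim1l.
move=> b [s [b_mono [b_unity b_det]]] _; rewrite /le_codim !codimE => b_le_c.
exact: below_pconnected_eq c_diag c_e c_conn c_not_excluded b_mono b_unity b_det b_le_c.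
Qed.

End PrimitiveRoot.

End ComplexReflectionGroup.

Theorem mainTheorem7 (m p n : nat) (zeta : algC) :
  (0 < m)%N -> (0 < p)%N -> (0 < n)%N -> (p %| m)%N ->
  m.-primitive_root zeta ->
  forall g : 'M[algC]_n,
    codim_atom (inGmpn m p) g <->
    (inGmpn m p g /\
     (reflection g \/
      (pconnected m p zeta g /\ ~ (codim g = 2%N /\ \det g = 1)))).
Proof.
move=> m_gt0 _ n_gt0 p_dvd_m zeta_prim g.
split=> [g_atom | [Gg [g_refl | [g_pconn g_not_excluded]]]].
- have [Gg _ _ _] := g_atom; have [s [g_mono [g_unity _]]] := Gg; split=> //.
  have [i si_i | s_id] := pickP (fun i => s i != i).
    by left; apply: (moving_atom_reflection m_gt0 g_atom g_mono g_unity si_i).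
  have g_diag : is_diag_mx g.
    apply/is_diag_mxP => a b a_b; apply: g_mono.
    by move/negbFE/eqP: (s_id a) => ->; rewrite eq_sym.
  right; split; first exact: (diag_atom_pconnected m_gt0 p_dvd_m zeta_prim g_atom g_diag).
  exact: (diag_atom_not_codim2_det1 m_gt0 g_atom g_diag).
- exact: codim1_atom (inGmpn_unit m_gt0) Gg (reflection_codim n_gt0 g_refl).
- exact: (pconnected_atom m_gt0 p_dvd_m zeta_prim Gg g_pconn g_not_excluded).
Qed.
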